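(* Let $(E,P,\vartheta)$ be a complete bipolar metric space and let $F\colon E\cup P\to E\cup P$ be a contravariant mapping (i.e. $F(E)\subseteq P$ and $F(P)\subseteq E$) which is a polynomial contraction in the sense that there exist $\pi\in(0,1)$, an integer $\sigma\geq1$ and functions $q_\upsilon\colon E\times P\to[0,\infty)$, $\upsilon=0,\dots,\sigma$, such that $$\sum_{\upsilon=0}^{\sigma} q_\upsilon(Ff,Fe)\,\vartheta^\upsilon(Ff,Fe)\leq \pi\sum_{\upsilon=0}^{\sigma} q_\upsilon(e,f)\,\vartheta^\upsilon(e,f)\quad\text{for all } e\in E,\ f\in P.$$ Assume moreover that (i) $F$ is continuous, and (ii) there exist $\varrho\in\{1,\dots,\sigma\}$ and $Q_\varrho>0$ such that $q_\varrho(e,f)\geq Q_\varrho$ for all $e\in E$, $f\in P$. Then $F$ has a unique fixed point.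
   Context: A bipolar metric space is a triple $(E,P,\vartheta)$ where $E,P$ are nonempty sets and $\vartheta\colon E\times P\to[0,\infty)$ satisfies: (1) for $e\in E$, $f\in P$, $\vartheta(e,f)=0$ iff $e=f$; (2) $\vartheta(e,f)=\vartheta(f,e)$ whenever $e,f\in E\cap P$; (3) $\vartheta(e,f)\leq\vartheta(e,z)+\vartheta(r,z)+\vartheta(r,f)$ for all $e,r\in E$, $z,f\in P$. A sequence $(x_n)$ in $E$ converges to $y\in P$ if $\vartheta(x_n,y)\to0$; a sequence $(y_n)$ in $P$ converges to $x\in E$ if $\vartheta(x,y_n)\to 0$. A bisequence $(x_n,y_n)$ with $x_n\in E$, $y_n\in P$ is convergent if both sequences converge, and Cauchy if for every $\varepsilon>0$ there is $N$ with $\vartheta(x_n,y_m)<\varepsilon$ for all $n,m\geq N$; the space is complete if every Cauchy bisequence is convergent. $F$ is continuous if whenever a sequence $(u_n)$ (in $E$ or in $P$) converges to a point $v$, the sequence $(Fu_n)$ converges to $Fv$. $\vartheta^\upsilon$ denotes the $\upsilon$-th power of $\vartheta$, with $\vartheta^0\equiv1$. A fixed point of $F$ is a point $g$ with $Fg=g$. *)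

From Stdlib Require Import Reals.
Open Scope R_scope.

(* A bipolar metric space (E,P,d): the two pole sets are predicates E, P on an
   ambient carrier type X (so that E ∩ P makes sense); d is only meaningful on
   E × P. *)
Record bipolar_metric (X : Type) (E P : X -> Prop) (d : X -> X -> R) : Prop := {
  bm_E_nonempty : exists x, E x;
  bm_P_nonempty : exists y, P y;
  bm_nonneg : forall e f, E e -> P f -> 0 <= d e f;
  bm_zero : forall e f, E e -> P f -> (d e f = 0 <-> e = f);
  bm_sym : forall e f, E e -> P e -> E f -> P f -> d e f = d f e;
  bm_tri : forall e r z f, E e -> E r -> P z -> P f ->
             d e f <= d e z + d r z + d r f
}.

Definition left_conv {X : Type} (d : X -> X -> R) (x : nat -> X) (y : X) : Prop :=
  Un_cv (fun n => d (x n) y) 0.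

Definition right_conv {X : Type} (d : X -> X -> R) (y : nat -> X) (x : X) : Prop :=
  Un_cv (fun n => d x (y n)) 0.

Definition cauchy_biseq {X : Type} (d : X -> X -> R) (x y : nat -> X) : Prop :=
  forall eps, eps > 0 -> exists N : nat,
    forall n m, (n >= N)%nat -> (m >= N)%nat -> d (x n) (y m) < eps.

Definition bm_complete {X : Type} (E P : X -> Prop) (d : X -> X -> R) : Prop :=
  forall x y : nat -> X, (forall n, E (x n)) -> (forall n, P (y n)) ->
    cauchy_biseq d x y ->
    (exists a, P a /\ left_conv d x a) /\ (exists b, E b /\ right_conv d y b).

Definition contravariant {X : Type} (E P : X -> Prop) (F : X -> X) : Prop :=
  (forall e, E e -> P (F e)) /\ (forall f, P f -> E (F f)).

Definition bm_continuous {X : Type} (E P : X -> Prop) (d : X -> X -> R)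
    (F : X -> X) : Prop :=
  (forall (u : nat -> X) v, (forall n, E (u n)) -> P v ->
      left_conv d u v -> right_conv d (fun n => F (u n)) (F v)) /\
  (forall (u : nat -> X) v, (forall n, P (u n)) -> E v ->
      right_conv d u v -> left_conv d (fun n => F (u n)) (F v)).

Definition poly_expr {X : Type} (d : X -> X -> R) (q : nat -> X -> X -> R)
    (sigma : nat) (e f : X) : R :=
  sum_f_R0 (fun u => q u e f * d e f ^ u) sigma.

(* Write Phi(e,f) for the polynomial expression sum_u q_u(e,f) d(e,f)^u.
   Along the Picard bisequence e_{n+1} = F (F e_n), f_n = F e_n the contraction
   makes Phi decay like pi^n at consecutive pairs; since Phi dominates Q d^rho,
   consecutive distances decay like (pi^(1/rho))^n, so the bisequence is Cauchy.
   Its limit a is a fixed point because F e_n = f_n converges to F a and the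
   limits of a Cauchy bisequence coincide.  Two fixed points g, h satisfy
   Phi(g,h) <= pi Phi(h,g) <= pi^2 Phi(g,h), hence Phi(g,h) = 0 and d(g,h) = 0. *)

From Stdlib Require Import Reals Lra Lia.
Open Scope R_scope.

Lemma pow_lt_pow_l (x y : R) (n : nat) : 0 <= x < y -> n <> 0%nat -> x ^ n < y ^ n.
Proof.
  intros Hxy Hn; destruct n as [|n]; [lia|].
  assert (Hle : x ^ n <= y ^ n) by (apply pow_incr; lra).
  assert (Hpos : 0 < y ^ n) by (apply pow_lt; lra).
  simpl; nra.
Qed.

Lemma pow_le_pow_inv_l (x y : R) (n : nat) :
  0 <= x -> 0 <= y -> n <> 0%nat -> x ^ n <= y ^ n -> x <= y.
Proof.
  intros Hx Hy Hn Hxy; destruct (Rle_lt_dec x y) as [|Hlt]; [assumption|].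
  pose proof (pow_lt_pow_l y x n (conj Hy Hlt) Hn); lra.
Qed.

Lemma exists_pow_root_lt_1 (a : R) (n : nat) :
  0 < a < 1 -> n <> 0%nat -> exists r, 0 <= r < 1 /\ r ^ n = a.
Proof.
  intros Ha Hn.
  set (r := Rpower a (/ INR n)).
  assert (Hr0 : 0 < r) by apply exp_pos.
  assert (Hrn : r ^ n = a).
  { rewrite <- Rpower_pow by exact Hr0.
    unfold r; rewrite Rpower_mult, Rinv_l by (apply not_0_INR; exact Hn).
    apply Rpower_1; lra. }
  exists r; split; [split; [lra|] | exact Hrn].
  destruct (Rlt_le_dec r 1) as [|H1]; [assumption|].
  pose proof (pow_R1_Rle r n H1); lra.
Qed.

(* The constant [c + 1] is an explicit upper bound for the n-th root of [c]. *)
Lemma pow_le_geometric_root (z c r : R) (n k : nat) :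
  0 <= z -> 0 <= c -> 0 <= r -> n <> 0%nat ->
  z ^ n <= c * (r ^ n) ^ k -> z <= (c + 1) * r ^ k.
Proof.
  intros Hz Hc Hr Hn Hzn.
  apply (pow_le_pow_inv_l _ _ n);
    [assumption | apply Rmult_le_pos; [lra | apply pow_le; lra] | assumption |].
  rewrite Rpow_mult_distr, <- pow_mult, Nat.mul_comm, pow_mult.
  assert (Hc1 : c <= (c + 1) ^ n).
  { pose proof (Rle_pow (c + 1) 1 n ltac:(lra) ltac:(lia)) as Hpow.
    rewrite pow_1 in Hpow; lra. }
  assert (0 <= (r ^ n) ^ k) by (apply pow_le, pow_le; exact Hr).
  nra.
Qed.

Lemma sum_f_R0_term_le (t : nat -> R) (n k : nat) :
  (forall u, (u <= n)%nat -> 0 <= t u) -> (k <= n)%nat -> t k <= sum_f_R0 t n.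
Proof.
  revert k; induction n as [|n IH]; intros k Ht Hk; simpl.
  - replace k with 0%nat by lia; lra.
  - assert (Hprev : forall u, (u <= n)%nat -> t u <= sum_f_R0 t n)
      by (intros u Hu; apply IH; [intros; apply Ht|]; lia).
    assert (0 <= t (S n)) by (apply Ht; lia).
    destruct (Nat.eq_dec k (S n)) as [->|Hne].
    + assert (0 <= t 0%nat) by (apply Ht; lia).
      pose proof (Hprev 0%nat ltac:(lia)); lra.
    + pose proof (Hprev k ltac:(lia)); lra.
Qed.

Lemma le_0_of_le_cv_0 (c : R) (u : nat -> R) :
  (forall n, c <= u n) -> Un_cv u 0 -> c <= 0.
Proof.
  intros Hc Hu; destruct (Rle_lt_dec c 0) as [|Hpos]; [assumption|].
  destruct (Hu c Hpos) as [N HN]; specialize (HN N (le_n N)); specialize (Hc N).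
  unfold R_dist in HN; rewrite Rminus_0_r in HN.
  pose proof (Rle_abs (u N)); lra.
Qed.

Lemma contravariant_fixed_point_poles (X : Type) (E P : X -> Prop) (F : X -> X) (g : X) :
  contravariant E P F -> (E g \/ P g) -> F g = g -> E g /\ P g.
Proof.
  intros [FE FP] [Hg|Hg] Hfix; split; auto; rewrite <- Hfix; auto.
Qed.

Section BipolarBisequences.

Variables (X : Type) (E P : X -> Prop) (d : X -> X -> R).
Hypothesis BM : bipolar_metric X E P d.

Section GeometricBisequence.

Variables (x y : nat -> X) (C r : R).
Hypotheses (Ex : forall n, E (x n)) (Py : forall n, P (y n)).
Hypotheses (HC : 0 <= C) (Hr : 0 <= r < 1).
Hypothesis Hdiag : forall n, d (x n) (y n) <= C * r ^ n.
Hypothesis Hstep : forall n, d (x (S n)) (y n) <= C * r ^ n.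

Lemma geometric_biseq_dist_le (n j : nat) :
  d (x n) (y (n + j)) <= 2 * C / (1 - r) * r ^ n /\
  d (x (n + j)) (y n) <= 2 * C / (1 - r) * r ^ n.
Proof.
  assert (Hgeom : forall k, C * r ^ k <= 2 * C / (1 - r) * r ^ k).
  { intro k; apply Rmult_le_compat_r; [apply pow_le; lra|].
    apply (Rmult_le_reg_r (1 - r)); [lra|].
    unfold Rdiv; rewrite Rmult_assoc, Rinv_l; nra. }
  assert (Hsum : forall k,
    2 * C * r ^ k + 2 * C / (1 - r) * r ^ S k = 2 * C / (1 - r) * r ^ k).
  { intro k; simpl; field; lra. }
  assert (Hdecr : forall k, C * r ^ S k <= C * r ^ k).
  { intro k; simpl.
    assert (0 <= C * r ^ k) by (apply Rmult_le_pos; [lra | apply pow_le; lra]); nra. }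
  revert n; induction j as [|j IH]; intro n.
  - rewrite Nat.add_0_r; pose proof (Hdiag n); pose proof (Hgeom n); lra.
  - destruct (IH (S n)) as [IH1 IH2]; rewrite <- plus_n_Sm.
    pose proof (bm_tri _ _ _ _ BM (x n) (x (S n)) (y n) (y (S n + j))
                  (Ex _) (Ex _) (Py _) (Py _)) as T1.
    pose proof (bm_tri _ _ _ _ BM (x (S n + j)) (x (S n)) (y (S n)) (y n)
                  (Ex _) (Ex _) (Py _) (Py _)) as T2.
    pose proof (Hdiag n); pose proof (Hstep n); pose proof (Hdiag (S n)).
    pose proof (Hdecr n); pose proof (Hsum n).
    simpl plus in *; split; lra.
Qed.

Lemma geometric_biseq_cauchy : cauchy_biseq d x y.
Proof.
  intros eps Heps.
  set (K := 2 * C / (1 - r)).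
  assert (HK : 0 <= K)
    by (unfold K, Rdiv; apply Rmult_le_pos; [lra | apply Rlt_le, Rinv_0_lt_compat; lra]).
  destruct (pow_lt_1_zero r ltac:(rewrite Rabs_right; lra) (eps / (K + 1)))
    as [N HN]; [apply Rdiv_lt_0_compat; lra|].
  assert (Hsmall : forall k, (k >= N)%nat -> K * r ^ k < eps).
  { intros k Hk; specialize (HN k Hk).
    rewrite Rabs_right in HN by (apply Rle_ge, pow_le; lra).
    apply (Rmult_lt_compat_l (K + 1)) in HN; [|lra].
    replace ((K + 1) * (eps / (K + 1))) with eps in HN by (field; lra).
    assert (0 <= r ^ k) by (apply pow_le; lra).
    nra. }
  exists N; intros n m Hn Hm.
  destruct (Nat.le_ge_cases n m) as [Hle|Hle].
  - replace m with (n + (m - n))%nat by lia.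
    eapply Rle_lt_trans; [apply geometric_biseq_dist_le | apply Hsmall; lia].
  - replace n with (m + (n - m))%nat by lia.
    eapply Rle_lt_trans; [apply geometric_biseq_dist_le | apply Hsmall; lia].
Qed.

End GeometricBisequence.

Lemma cauchy_biseq_diag_cv (x y : nat -> X) :
  (forall n, E (x n)) -> (forall n, P (y n)) ->
  cauchy_biseq d x y -> Un_cv (fun n => d (x n) (y n)) 0.
Proof.
  intros Ex Py Hcau eps Heps.
  destruct (Hcau eps Heps) as [N HN]; exists N; intros n Hn.
  unfold R_dist; rewrite Rminus_0_r, Rabs_right; [auto|].
  apply Rle_ge, (bm_nonneg _ _ _ _ BM); auto.
Qed.

Lemma cauchy_biseq_limits_eq (x y : nat -> X) (a b : X) :
  (forall n, E (x n)) -> (forall n, P (y n)) -> P a -> E b ->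
  cauchy_biseq d x y -> left_conv d x a -> right_conv d y b -> b = a.
Proof.
  intros Ex Py Pa Eb Hcau Hxa Hyb.
  apply (bm_zero _ _ _ _ BM); auto.
  apply Rle_antisym; [|apply (bm_nonneg _ _ _ _ BM); auto].
  apply (le_0_of_le_cv_0 _ (fun n => d b (y n) + d (x n) (y n) + d (x n) a)).
  - intro n; apply (bm_tri _ _ _ _ BM); auto.
  - rewrite <- (Rplus_0_r 0) at 1; rewrite <- (Rplus_0_r 0) at 1.
    apply CV_plus; [apply CV_plus|]; auto using cauchy_biseq_diag_cv.
Qed.

End BipolarBisequences.

Section PolynomialContraction.

Variables (X : Type) (E P : X -> Prop) (d : X -> X -> R) (F : X -> X).
Variables (pi : R) (sigma : nat) (q : nat -> X -> X -> R) (rho : nat) (Q : R).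
Hypothesis BM : bipolar_metric X E P d.
Hypothesis HF : contravariant E P F.
Hypothesis Hpi : 0 < pi < 1.
Hypothesis Hq : forall u e f, (u <= sigma)%nat -> E e -> P f -> 0 <= q u e f.
Hypothesis Hcontr : forall e f, E e -> P f ->
  poly_expr d q sigma (F f) (F e) <= pi * poly_expr d q sigma e f.
Hypothesis Hrho : (1 <= rho <= sigma)%nat.
Hypothesis HQ : Q > 0.
Hypothesis HqQ : forall e f, E e -> P f -> q rho e f >= Q.

Let Phi := poly_expr d q sigma.

Lemma poly_expr_term_le (u : nat) (e f : X) : E e -> P f -> (u <= sigma)%nat ->
  q u e f * d e f ^ u <= Phi e f.
Proof.
  intros He Hf Hu; apply (sum_f_R0_term_le (fun v => q v e f * d e f ^ v)); [|assumption].
  intros v Hv; apply Rmult_le_pos; [auto | apply pow_le, (bm_nonneg _ _ _ _ BM); auto].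
Qed.

Lemma poly_expr_nonneg (e f : X) : E e -> P f -> 0 <= Phi e f.
Proof.
  intros He Hf; pose proof (poly_expr_term_le 0 e f He Hf ltac:(lia)).
  simpl; pose proof (Hq 0 e f ltac:(lia) He Hf); lra.
Qed.

Lemma poly_expr_ge_dist_pow (e f : X) : E e -> P f -> Q * d e f ^ rho <= Phi e f.
Proof.
  intros He Hf; eapply Rle_trans; [|apply (poly_expr_term_le rho); auto; lia].
  apply Rmult_le_compat_r; [apply pow_le, (bm_nonneg _ _ _ _ BM); auto|].
  pose proof (HqQ e f He Hf); lra.
Qed.

Lemma poly_contraction_fixed_points_eq (g h : X) :
  E g -> P g -> E h -> P h -> F g = g -> F h = h -> g = h.
Proof.
  intros Eg Pg Eh Ph Fg Fh.
  pose proof (Hcontr h g Eh Pg) as Hgh; pose proof (Hcontr g h Eg Ph) as Hhg.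
  rewrite Fg, Fh in Hgh, Hhg; fold Phi in Hgh, Hhg.
  pose proof (poly_expr_nonneg g h Eg Ph); pose proof (poly_expr_nonneg h g Eh Pg).
  pose proof (poly_expr_ge_dist_pow g h Eg Ph) as Hpow.
  assert (Hdist : 0 <= d g h) by (apply (bm_nonneg _ _ _ _ BM); auto).
  assert (0 <= d g h ^ rho) by (apply pow_le; exact Hdist).
  assert (Hsq : Phi g h <= pi * (pi * Phi g h))
    by (eapply Rle_trans; [exact Hgh | apply Rmult_le_compat_l; lra]).
  assert (HPhi : Phi g h = 0) by nra.
  assert (Hzero : d g h ^ rho = 0) by nra.
  apply (bm_zero _ _ _ _ BM); auto.
  destruct (Req_dec (d g h) 0) as [|Hne]; [assumption|].
  exfalso; exact (pow_nonzero _ rho Hne Hzero).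
Qed.

Section PicardBisequence.

Variable e0 : X.
Hypothesis He0 : E e0.

Definition picard_E (n : nat) : X := Nat.iter n (fun z => F (F z)) e0.
Definition picard_P (n : nat) : X := F (picard_E n).

Lemma picard_E_in (n : nat) : E (picard_E n).
Proof. destruct HF as [FE FP]; induction n; simpl; auto. Qed.

Lemma picard_P_in (n : nat) : P (picard_P n).
Proof. apply HF, picard_E_in. Qed.

Let Phi0 := Phi e0 (F e0).

Lemma picard_step_contr (n : nat) :
  Phi (picard_E (S n)) (picard_P n) <= pi * Phi (picard_E n) (picard_P n).
Proof. apply Hcontr; auto using picard_E_in, picard_P_in. Qed.

Lemma picard_diag_contr (n : nat) :
  Phi (picard_E (S n)) (picard_P (S n)) <= pi * Phi (picard_E (S n)) (picard_P n).
Proof. apply (Hcontr (picard_E (S n)) (picard_P n)); auto using picard_E_in, picard_P_in. Qed.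

Lemma picard_diag_decay (n : nat) : Phi (picard_E n) (picard_P n) <= pi ^ n * Phi0.
Proof.
  induction n as [|n IH]; [rewrite pow_O, Rmult_1_l; apply Rle_refl|].
  pose proof (picard_step_contr n) as Hstep.
  pose proof (poly_expr_nonneg _ _ (picard_E_in n) (picard_P_in n)).
  assert (Hle : Phi (picard_E (S n)) (picard_P n) <= Phi (picard_E n) (picard_P n)) by nra.
  eapply Rle_trans; [apply picard_diag_contr|]; rewrite <- tech_pow_Rmult, Rmult_assoc.
  apply Rmult_le_compat_l; lra.
Qed.

Lemma picard_step_decay (n : nat) : Phi (picard_E (S n)) (picard_P n) <= pi ^ n * Phi0.
Proof.
  pose proof (picard_step_contr n); pose proof (picard_diag_decay n).
  pose proof (poly_expr_nonneg _ _ (picard_E_in n) (picard_P_in n)).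
  nra.
Qed.

Lemma picard_dist_geometric : exists C r, 0 <= C /\ 0 <= r < 1 /\
  (forall n, d (picard_E n) (picard_P n) <= C * r ^ n) /\
  (forall n, d (picard_E (S n)) (picard_P n) <= C * r ^ n).
Proof.
  destruct (exists_pow_root_lt_1 pi rho Hpi ltac:(lia)) as [r [Hr Hrpi]].
  assert (HPhi0 : 0 <= Phi0 / Q).
  { apply Rmult_le_pos; [apply poly_expr_nonneg; [exact He0 | apply HF, He0]|].
    apply Rlt_le, Rinv_0_lt_compat; lra. }
  assert (Hroot : forall e f n, E e -> P f -> Phi e f <= pi ^ n * Phi0 ->
      d e f <= (Phi0 / Q + 1) * r ^ n).
  { intros e f n He Hf Hdecay.
    apply (pow_le_geometric_root _ _ _ rho);
      [apply (bm_nonneg _ _ _ _ BM); auto | exact HPhi0 | lra | lia |].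
    rewrite Hrpi; apply (Rmult_le_reg_l Q); [lra|].
    pose proof (poly_expr_ge_dist_pow e f He Hf).
    replace (Q * (Phi0 / Q * pi ^ n)) with (pi ^ n * Phi0) by (field; lra); lra. }
  exists (Phi0 / Q + 1), r; repeat split; try lra; intro n; apply Hroot;
    auto using picard_E_in, picard_P_in, picard_diag_decay, picard_step_decay.
Qed.

Lemma picard_cauchy : cauchy_biseq d picard_E picard_P.
Proof.
  destruct picard_dist_geometric as [C [r [HC [Hr [Hdiag Hstep]]]]].
  exact (geometric_biseq_cauchy _ _ _ _ BM _ _ _ _ picard_E_in picard_P_in HC Hr Hdiag Hstep).
Qed.

End PicardBisequence.

Lemma poly_contraction_has_fixed_point :
  bm_complete E P d -> bm_continuous E P d F -> exists a, E a /\ P a /\ F a = a.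
Proof.
  intros Hcomp [Fcont _].
  destruct (bm_E_nonempty _ _ _ _ BM) as [e0 He0].
  pose proof (picard_cauchy e0 He0) as Hcau.
  destruct (Hcomp _ _ (picard_E_in e0 He0) (picard_P_in e0 He0) Hcau) as [[a [Pa Ha]] _].
  pose proof (Fcont _ a (picard_E_in e0 He0) Pa Ha : right_conv d (picard_P e0) (F a))
    as HFa.
  assert (EFa : E (F a)) by (apply HF; exact Pa).
  pose proof (cauchy_biseq_limits_eq _ _ _ _ BM _ _ _ _ (picard_E_in e0 He0)
                (picard_P_in e0 He0) Pa EFa Hcau Ha HFa) as Hfix.
  exists a; rewrite Hfix in EFa; auto.
Qed.

End PolynomialContraction.

Theorem theorem3p3 (X : Type) (E P : X -> Prop) (d : X -> X -> R) (F : X -> X)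
  (pi : R) (sigma : nat) (q : nat -> X -> X -> R) :
  bipolar_metric X E P d ->
  bm_complete E P d ->
  contravariant E P F ->
  0 < pi < 1 ->
  (1 <= sigma)%nat ->
  (forall u e f, (u <= sigma)%nat -> E e -> P f -> 0 <= q u e f) ->
  (forall e f, E e -> P f ->
     poly_expr d q sigma (F f) (F e) <= pi * poly_expr d q sigma e f) ->
  bm_continuous E P d F ->
  (exists rho : nat, (1 <= rho <= sigma)%nat /\
     exists Q : R, Q > 0 /\ forall e f, E e -> P f -> q rho e f >= Q) ->
  exists! g : X, (E g \/ P g) /\ F g = g.
Proof.
  (* [1 <= sigma] is implied by [1 <= rho <= sigma]. *)
  intros BM Hcomp HF Hpi _ Hq Hcontr Hcont [rho [Hrho [Q [HQ HqQ]]]].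
  destruct (poly_contraction_has_fixed_point X E P d F pi sigma q rho Q)
    as [a [Ea [Pa Fa]]]; auto.
  exists a; split; [auto|].
  intros g [Hg Fg].
  destruct (contravariant_fixed_point_poles X E P F g HF Hg Fg) as [Eg Pg].
  apply (poly_contraction_fixed_points_eq X E P d F pi sigma q rho Q); auto.
Qed.
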